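(* Let $(G,X,\Gamma)$ be a $(\mu,\nu)$-path system group containing a $\delta$-constricting element $(g,A)$. There exist $\theta\ge1$ and an integer $M\in[1,\theta]$ such that for every $u\in G$ the following are equivalent: (I) $u\in E(g,A)$; (II) there exists $p\in\{-1,1\}$ with $ug^Mu^{-1}=g^{pM}$; (III) there exist $m,n\in\mathbb Z\setminus\{0\}$ with $ug^mu^{-1}=g^n$. Moreover, setting $E^+(g,A)=\{u\in G: ug^Mu^{-1}=g^M\}$, we have $[E(g,A):E^+(g,A)]\le2$.
   Context: A path is a rectifiable continuous map $\alpha\colon[a,b]\to X$ parametrised by arc length; it is a $(\kappa,\lambda)$-quasi-geodesic if $d(\alpha(t),\alpha(t'))\le|t-t'|\le\kappa d(\alpha(t),\alpha(t'))+\lambda$. A $(\mu,\nu)$-path system group $(G,X,\Gamma)$ is a group $G$ acting properly by isometries on a geodesic metric space $X$ together with a $G$-invariant collection $\Gamma$ of paths closed under subpaths, such that any two points are joined by an element of $\Gamma$ and every element is a $(\mu,\nu)$-quasi-geodesic. A map $\pi_A\colon X\to A$ is $\delta$-constricting if (CS1) $d(x,\pi_A(x))\le\delta$ for $x\in A$, and (CS2) for all $x,y\in X$ and $\gamma\in\Gamma$ joining them, if $d(\pi_A(x),\pi_A(y))>\delta$ then $\gamma$ meets $B_X(\pi_A(x),\delta)$ and $B_X(\pi_A(y),\delta)$. An element $g$ is $\delta$-constricting, written $(g,A)$, if it has infinite order and $A$ is a $\langle g\rangle$-invariant subset admitting a $\delta$-constricting map, on which $\langle g\rangle$ acts $\delta$-coboundedly.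 The elementary closure is $E(g,A)=\{u\in G: d_{Haus}(uA,A)<\infty\}$, $d_{Haus}$ denoting Hausdorff distance. *)

From Stdlib Require Import Reals Lra Lia ZArith List Sorting.Sorted.
Open Scope R_scope.

Record Group := {
  gcar :> Type;
  gmul : gcar -> gcar -> gcar;
  ginv : gcar -> gcar;
  gone : gcar;
  gmul_assoc : forall x y z, gmul x (gmul y z) = gmul (gmul x y) z;
  gmul_1l : forall x, gmul gone x = x;
  gmul_Vl : forall x, gmul (ginv x) x = gone
}.
Arguments gmul {_}.
Arguments ginv {_}.
Arguments gone {_}.

Fixpoint gpow_nat {G : Group} (x : G) (n : nat) : G :=
  match n with O => gone | S k => gmul x (gpow_nat x k) end.

Definition gpow {G : Group} (x : G) (n : Z) : G :=
  match n with
  | Z0 => gone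
  | Zpos p => gpow_nat x (Pos.to_nat p)
  | Zneg p => ginv (gpow_nat x (Pos.to_nat p))
  end.

Definition gconj {G : Group} (u x : G) : G := gmul (gmul u x) (ginv u).

Definition infinite_order {G : Group} (g : G) : Prop :=
  forall n : Z, n <> 0%Z -> gpow g n <> gone.

Record MetricSpace := {
  mcar :> Type;
  dist : mcar -> mcar -> R;
  mpoint : mcar;
  dist_eq0 : forall x y, dist x y = 0 <-> x = y;
  dist_sym : forall x y, dist x y = dist y x;
  dist_tri : forall x y z, dist x z <= dist x y + dist y z
}.
Arguments dist {_}.

Definition geodesic (X : MetricSpace) : Prop :=
  forall x y : X, exists c : R -> X,
    c 0 = x /\ c (dist x y) = y /\
    forall s t, 0 <= s <= dist x y -> 0 <= t <= dist x y ->
      dist (c s) (c t) = Rabs (s - t).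

Definition isometric_action (G : Group) (X : MetricSpace) (act : G -> X -> X) : Prop :=
  (forall x, act gone x = x) /\
  (forall g h x, act (gmul g h) x = act g (act h x)) /\
  (forall g x y, dist (act g x) (act g y) = dist x y).

Definition proper_action (G : Group) (X : MetricSpace) (act : G -> X -> X) : Prop :=
  forall (x : X) (r : R), exists l : list G,
    forall g : G, dist x (act g x) <= r -> In g l.

(** * Paths: a map defined (at least) on [pa, pb] *)
Record path (X : MetricSpace) := mkpath { pa : R; pb : R; pf : R -> X }.
Arguments mkpath {X}.
Arguments pa {X}.
Arguments pb {X}.
Arguments pf {X}.

Fixpoint chain_sum {X : MetricSpace} (f : R -> X) (t0 : R) (l : list R) : R :=
  match l with
  | nil => 0
  | t1 :: l' => dist (f t0) (f t1) + chain_sum f t1 l'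
  end.

Definition partition_sums {X : MetricSpace} (f : R -> X) (s t : R) : R -> Prop :=
  fun v => exists l : list R,
    Sorted Rle (s :: l ++ t :: nil) /\ v = chain_sum f s (l ++ t :: nil).

Definition length_is {X : MetricSpace} (f : R -> X) (s t L : R) : Prop :=
  is_lub (partition_sums f s t) L.

Definition continuous_on {X : MetricSpace} (f : R -> X) (a b : R) : Prop :=
  forall t, a <= t <= b -> forall e, 0 < e -> exists dl, 0 < dl /\
    forall t', a <= t' <= b -> Rabs (t' - t) < dl -> dist (f t) (f t') < e.

(** rectifiable continuous path parametrised by arc length *)
Definition is_path {X : MetricSpace} (al : path X) : Prop :=
  pa al <= pb al /\ continuous_on (pf al) (pa al) (pb al) /\
  forall s t, pa al <= s -> s <= t -> t <= pb al ->
    length_is (pf al) s t (t - s).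

Definition quasi_geodesic {X : MetricSpace} (kappa lambda : R) (al : path X) : Prop :=
  forall t t', pa al <= t <= pb al -> pa al <= t' <= pb al ->
    dist (pf al t) (pf al t') <= Rabs (t - t') /\
    Rabs (t - t') <= kappa * dist (pf al t) (pf al t') + lambda.

Definition joins {X : MetricSpace} (al : path X) (x y : X) : Prop :=
  pf al (pa al) = x /\ pf al (pb al) = y.

Definition translate {G : Group} {X : MetricSpace} (act : G -> X -> X) (g : G)
  (al : path X) : path X := mkpath (pa al) (pb al) (fun t => act g (pf al t)).

Definition path_system_group (G : Group) (X : MetricSpace) (act : G -> X -> X)
  (Gam : path X -> Prop) (mu nu : R) : Prop :=
  geodesic X /\ isometric_action G X act /\ proper_action G X act /\
  (forall al, Gam al -> is_path al) /\
  (forall g al, Gam al -> Gam (translate act g al)) /\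
  (forall al s t, Gam al -> pa al <= s -> s <= t -> t <= pb al ->
     Gam (mkpath s t (pf al))) /\
  (forall x y : X, exists al, Gam al /\ joins al x y) /\
  (forall al, Gam al -> quasi_geodesic mu nu al).

Definition meets_ball {X : MetricSpace} (al : path X) (p : X) (r : R) : Prop :=
  exists t, pa al <= t <= pb al /\ dist (pf al t) p <= r.

Definition constricting_map {X : MetricSpace} (Gam : path X -> Prop) (delta : R)
  (A : X -> Prop) (pi : X -> X) : Prop :=
  (forall x, A (pi x)) /\
  (forall x, A x -> dist x (pi x) <= delta) /\
  (forall x y al, Gam al -> joins al x y -> dist (pi x) (pi y) > delta ->
     meets_ball al (pi x) delta /\ meets_ball al (pi y) delta).

Definition constricting_element {G : Group} {X : MetricSpace} (act : G -> X -> X)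
  (Gam : path X -> Prop) (delta : R) (g : G) (A : X -> Prop) : Prop :=
  infinite_order g /\
  (forall n : Z, forall x, A x <-> A (act (gpow g n) x)) /\
  (exists pi, constricting_map Gam delta A pi) /\
  (forall x y, A x -> A y -> exists n : Z, dist (act (gpow g n) x) y <= delta).

(** finite Hausdorff distance between uA and A *)
Definition elementary_closure {G : Group} {X : MetricSpace} (act : G -> X -> X)
  (A : X -> Prop) (u : G) : Prop :=
  exists r : R,
    (forall x, A x -> exists y, A y /\ dist (act u x) y <= r) /\
    (forall y, A y -> exists x, A x /\ dist (act u x) y <= r).

From Pilot Require Import Defs.
From Stdlib Require Import Reals ZArith List.
Open Scope R_scope.
From Stdlib Require Import Lia Lra Classical IndefiniteDescription.
(* [Reals] exports its own [dist]; re-import [Defs] so that [dist] is the metric of Defs. *)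
Import Defs.

(* An element u lies in E(g,A) iff it commensurates <g>, i.e. u g^m u^-1 = g^n with m, n <> 0:
   since <g> acts coboundedly on A, such a u moves A within bounded Hausdorff distance of
   itself, and conversely properness forces two of the elements g^(-j_k) u g^k u^-1, which
   all move a base point x0 in A boundedly, to coincide.
   Constriction makes Gamma-paths between points of uA stay uniformly close to uA. This gives
   a radius D independent of u such that every u in E(g,A) lies in a double coset <g> v <g>
   with d(x0, v x0) <= D, so by properness finitely many double cosets cover E(g,A). If
   u g^m u^-1 = g^n, two powers of u fall into the same double coset, which forces |m| = |n|;
   the product M of such exponents over the finitely many representatives then satisfies
   u g^M u^-1 = g^(+-M) for every u in E(g,A), and the sign is a homomorphism to {+-1}. *)

Section GroupTheory.
Variable G : Group.
Implicit Types x y z w : G.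

Lemma gmul_Vr x : gmul x (ginv x) = gone.
Proof.
  rewrite <- (gmul_1l G (gmul x (ginv x))).
  rewrite <- (gmul_Vl G (ginv x)) at 1.
  rewrite <- gmul_assoc, (gmul_assoc G (ginv x) x (ginv x)), gmul_Vl, gmul_1l.
  apply gmul_Vl.
Qed.

Lemma gmul_1r x : gmul x gone = x.
Proof. rewrite <- (gmul_Vl G x), gmul_assoc, gmul_Vr, gmul_1l. reflexivity. Qed.

Lemma gmul_KV x y : gmul (gmul x y) (ginv y) = x.
Proof. rewrite <- gmul_assoc, gmul_Vr, gmul_1r. reflexivity. Qed.

Lemma gmul_VK x y : gmul (ginv x) (gmul x y) = y.
Proof. rewrite gmul_assoc, gmul_Vl, gmul_1l. reflexivity. Qed.

Lemma gmul_KVl x y : gmul x (gmul (ginv x) y) = y.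
Proof. rewrite gmul_assoc, gmul_Vr, gmul_1l. reflexivity. Qed.

Lemma ginv_unique x y : gmul x y = gone -> ginv x = y.
Proof. intro H. rewrite <- (gmul_1r (ginv x)), <- H, gmul_VK. reflexivity. Qed.

Lemma ginv_inv x : ginv (ginv x) = x.
Proof. apply ginv_unique, gmul_Vl. Qed.

Lemma ginv_mul x y : ginv (gmul x y) = gmul (ginv y) (ginv x).
Proof.
  apply ginv_unique.
  rewrite <- gmul_assoc, (gmul_assoc G y), gmul_Vr, gmul_1l, gmul_Vr. reflexivity.
Qed.

Lemma ginv_one : ginv (@gone G) = gone.
Proof. apply ginv_unique, gmul_1l. Qed.

Lemma gpow_nat_comm x n : gmul x (gpow_nat x n) = gmul (gpow_nat x n) x.
Proof.
  induction n as [|n IHn]; simpl.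
  - rewrite gmul_1l, gmul_1r. reflexivity.
  - rewrite <- gmul_assoc, <- IHn. reflexivity.
Qed.

Lemma gpow_of_nat x n : gpow x (Z.of_nat n) = gpow_nat x n.
Proof. destruct n; simpl; [reflexivity|]. rewrite SuccNat2Pos.id_succ. reflexivity. Qed.

Lemma gpow_opp x k : gpow x (- k) = ginv (gpow x k).
Proof. destruct k; simpl; [rewrite ginv_one| |rewrite ginv_inv]; reflexivity. Qed.

Lemma gpow_succ x k : gpow x (Z.succ k) = gmul x (gpow x k).
Proof.
  destruct (Z_le_gt_dec 0 k).
  - replace k with (Z.of_nat (Z.to_nat k)) by lia.
    rewrite <- Nat2Z.inj_succ, !gpow_of_nat. reflexivity.
  - replace k with (- Z.of_nat (S (Z.to_nat (- k - 1))))%Z by lia.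
    set (n := Z.to_nat (- k - 1)).
    replace (Z.succ (- Z.of_nat (S n)))%Z with (- Z.of_nat n)%Z by lia.
    rewrite !gpow_opp, !gpow_of_nat. simpl.
    rewrite gpow_nat_comm, ginv_mul, gmul_KVl. reflexivity.
Qed.

Lemma gpow_pred x k : gpow x (Z.pred k) = gmul (ginv x) (gpow x k).
Proof. rewrite <- (Z.succ_pred k) at 2. rewrite gpow_succ, gmul_VK. reflexivity. Qed.

Lemma gpow_add x a b : gpow x (a + b) = gmul (gpow x a) (gpow x b).
Proof.
  induction a as [|a IHa|a IHa] using Z.peano_ind.
  - simpl. rewrite gmul_1l. reflexivity.
  - replace (Z.succ a + b)%Z with (Z.succ (a + b)) by lia.
    rewrite !gpow_succ, IHa, gmul_assoc. reflexivity.
  - replace (Z.pred a + b)%Z with (Z.pred (a + b)) by lia.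
    rewrite !gpow_pred, IHa, gmul_assoc. reflexivity.
Qed.

Lemma gpow_comm x a b : gmul (gpow x a) (gpow x b) = gmul (gpow x b) (gpow x a).
Proof. rewrite <- !gpow_add, Z.add_comm. reflexivity. Qed.

Lemma gpow_mul x a b : gpow (gpow x a) b = gpow x (a * b).
Proof.
  induction b as [|b IHb|b IHb] using Z.peano_ind.
  - rewrite Z.mul_0_r. reflexivity.
  - rewrite gpow_succ, IHb, Z.mul_succ_r, Z.add_comm, gpow_add. reflexivity.
  - rewrite gpow_pred, IHb, Z.mul_pred_r, <- Z.add_opp_r, Z.add_comm, gpow_add, gpow_opp.
    reflexivity.
Qed.

Lemma gconj_mul w x y : gconj w (gmul x y) = gmul (gconj w x) (gconj w y).
Proof. unfold gconj. rewrite <- !gmul_assoc, (gmul_VK w). reflexivity. Qed.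

Lemma gconj_one w : gconj w gone = gone.
Proof. unfold gconj. rewrite gmul_1r, gmul_Vr. reflexivity. Qed.

Lemma gconj_inv w x : gconj w (ginv x) = ginv (gconj w x).
Proof. symmetry. apply ginv_unique. rewrite <- gconj_mul, gmul_Vr, gconj_one. reflexivity. Qed.

Lemma gconj_pow w x k : gconj w (gpow x k) = gpow (gconj w x) k.
Proof.
  induction k as [|k IHk|k IHk] using Z.peano_ind.
  - apply gconj_one.
  - rewrite !gpow_succ, gconj_mul, IHk. reflexivity.
  - rewrite !gpow_pred, gconj_mul, IHk, gconj_inv. reflexivity.
Qed.

Lemma gconj_comp w1 w2 x : gconj (gmul w1 w2) x = gconj w1 (gconj w2 x).
Proof. unfold gconj. rewrite ginv_mul, !gmul_assoc. reflexivity. Qed.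

Lemma gconj_1l x : gconj gone x = x.
Proof. unfold gconj. rewrite ginv_one, gmul_1l, gmul_1r. reflexivity. Qed.

Lemma gconj_VK w x : gconj (ginv w) (gconj w x) = x.
Proof. rewrite <- gconj_comp, gmul_Vl, gconj_1l. reflexivity. Qed.

Lemma gconj_inj w x y : gconj w x = gconj w y -> x = y.
Proof. intro H. rewrite <- (gconj_VK w x), H, gconj_VK. reflexivity. Qed.

Lemma gconj_gpow x i k : gconj (gpow x i) (gpow x k) = gpow x k.
Proof. unfold gconj. rewrite gpow_comm, gmul_KV. reflexivity. Qed.

Lemma gmul_gconj u x : gmul u x = gmul (gconj u x) u.
Proof. unfold gconj. rewrite <- (gmul_assoc G _ (ginv u)), gmul_Vl, gmul_1r. reflexivity. Qed.

End GroupTheory.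

Lemma gpow_inj (G : Group) (g : G) a b :
  infinite_order g -> gpow g a = gpow g b -> a = b.
Proof.
  intros Hg H. destruct (Z.eq_dec (a - b) 0) as [E|E]; [lia|].
  exfalso. apply (Hg _ E).
  rewrite <- Z.add_opp_r, gpow_add, gpow_opp, H, gmul_Vr. reflexivity.
Qed.

Lemma pigeonhole_list (T : Type) (f : nat -> T) (l : list T) :
  (forall i, (i <= length l)%nat -> In (f i) l) ->
  exists i j, (i < j <= length l)%nat /\ f i = f j.
Proof.
  intros H. apply NNPP. intro Hn.
  assert (ND : NoDup (map f (seq 0 (S (length l))))).
  { apply NoDup_map_NoDup_ForallPairs; [|apply seq_NoDup].
    intros a b Ha Hb Hab. apply in_seq in Ha, Hb.
    destruct (Nat.lt_trichotomy a b) as [?|[?|?]]; auto; exfalso; apply Hn.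
    - exists a, b; split; [lia|auto].
    - exists b, a; split; [lia|auto]. }
  assert (I : incl (map f (seq 0 (S (length l)))) l).
  { intros x Hx. apply in_map_iff in Hx as [i [<- Hi]].
    apply in_seq in Hi. apply H. lia. }
  pose proof (NoDup_incl_length ND I) as Hlen.
  rewrite length_map, length_seq in Hlen. lia.
Qed.

Definition commensurates {G : Group} (g u : G) : Prop :=
  exists m n : Z, m <> 0%Z /\ n <> 0%Z /\ gconj u (gpow g m) = gpow g n.

Definition in_double_coset {G : Group} (g v u : G) : Prop :=
  exists i j : Z, u = gmul (gmul (gpow g i) v) (gpow g j).

Lemma Z_abs_eq_of_pow_ratio (a b m n : Z) (i j : nat) :
  a <> 0%Z -> n <> 0%Z -> (i < j)%nat ->
  (b * m ^ Z.of_nat i = n ^ Z.of_nat i * a)%Z ->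
  (b * m ^ Z.of_nat j = n ^ Z.of_nat j * a)%Z ->
  Z.abs m = Z.abs n.
Proof.
  intros Ha Hn Hij Ei Ej.
  set (s := (j - i)%nat).
  replace (Z.of_nat j) with (Z.of_nat i + Z.of_nat s)%Z in Ej by lia.
  rewrite !Z.pow_add_r in Ej by lia.
  assert (Hpow : (m ^ Z.of_nat s = n ^ Z.of_nat s)%Z).
  { apply (Z.mul_reg_l _ _ (n ^ Z.of_nat i * a)).
    - apply Z.neq_mul_0. split; [apply Z.pow_nonzero; lia|exact Ha].
    - transitivity (b * (m ^ Z.of_nat i * m ^ Z.of_nat s))%Z;
        [rewrite Z.mul_assoc, Ei|rewrite Ej]; ring. }
  apply (Z.pow_inj_l _ _ (Z.of_nat s)); try lia.
  rewrite <- !Z.abs_pow, Hpow. reflexivity.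
Qed.

Section Commensurator.
Variables (G : Group) (g : G).

Lemma gconj_gpow_scale u m n q : gconj u (gpow g m) = gpow g n ->
  gconj u (gpow g (m * q)) = gpow g (n * q).
Proof. intro H. rewrite <- !gpow_mul, gconj_pow, H. reflexivity. Qed.

Lemma gconj_gpow_nat u m n k : gconj u (gpow g m) = gpow g n ->
  gconj (gpow_nat u k) (gpow g (m ^ Z.of_nat k)) = gpow g (n ^ Z.of_nat k).
Proof.
  intro H. induction k as [|k IHk].
  - apply gconj_1l.
  - rewrite Nat2Z.inj_succ, !Z.pow_succ_r by lia. simpl gpow_nat.
    rewrite gconj_comp, (Z.mul_comm m), (gconj_gpow_scale _ _ _ _ IHk), (Z.mul_comm _ m).
    apply gconj_gpow_scale, H.
Qed.

Lemma commensurates_gpow_nat u m n k : m <> 0%Z -> n <> 0%Z ->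
  gconj u (gpow g m) = gpow g n -> commensurates g (gpow_nat u k).
Proof.
  intros Hm Hn H. exists (m ^ Z.of_nat k)%Z, (n ^ Z.of_nat k)%Z.
  split; [apply Z.pow_nonzero; lia|]. split; [apply Z.pow_nonzero; lia|].
  apply gconj_gpow_nat, H.
Qed.

Lemma in_double_coset_sym v u : in_double_coset g v u -> in_double_coset g u v.
Proof.
  intros [i [j ->]]. exists (- i)%Z, (- j)%Z.
  rewrite !gpow_opp, (gmul_assoc G (ginv _)), gmul_VK, gmul_KV. reflexivity.
Qed.

Lemma gconj_double_coset v u a b : in_double_coset g v u ->
  gconj v (gpow g a) = gpow g b -> gconj u (gpow g a) = gpow g b.
Proof. intros [i [j ->]] H. rewrite !gconj_comp, gconj_gpow, H, gconj_gpow. reflexivity. Qed.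

Lemma commensurates_double_coset v u : in_double_coset g v u ->
  commensurates g u -> commensurates g v.
Proof.
  intros Hvu [m [n [Hm [Hn H]]]]. exists m, n. split; [exact Hm|]. split; [exact Hn|].
  eapply gconj_double_coset; [apply in_double_coset_sym, Hvu|exact H].
Qed.

Lemma gconj_gpow_sub u a b i j :
  gmul (gpow g (- a)) (gconj u (gpow g i)) = gmul (gpow g (- b)) (gconj u (gpow g j)) ->
  gconj u (gpow g (j - i)) = gpow g (b - a).
Proof.
  intro H.
  assert (Hj : gconj u (gpow g j) = gmul (gpow g (b - a)) (gconj u (gpow g i))).
  { rewrite <- (gmul_KVl G (gpow g b) (gconj u (gpow g j))), <- gpow_opp, <- H.
    rewrite gmul_assoc, <- gpow_add, Z.add_opp_r. reflexivity. }
  rewrite <- Z.add_opp_r, gpow_add, gconj_mul, gpow_opp, gconj_inv, Hj, gmul_KV.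
  reflexivity.
Qed.

Hypothesis Hinf : infinite_order g.
Variable F : list G.
Hypothesis HF : forall u, commensurates g u -> exists v, In v F /\ in_double_coset g v u.

(* Two powers [u^i], [u^j] lie in the same double coset [<g> v <g>]; comparing how
   they conjugate powers of [g] with how [v] does forces [|m| = |n|]. *)
Lemma commensurates_gconj_sign u : commensurates g u -> exists m, m <> 0%Z /\
  (gconj u (gpow g m) = gpow g m \/ gconj u (gpow g m) = gpow g (- m)).
Proof.
  intros [m [n [Hm [Hn H]]]].
  assert (Hk : forall k : nat, exists v, In v F /\ in_double_coset g v (gpow_nat u k)).
  { intro k. apply HF, (commensurates_gpow_nat u m n k Hm Hn H). }
  apply functional_choice in Hk as [vf Hvf].
  destruct (pigeonhole_list G vf F) as [i [j [Hij Heq]]]; [intros k _; apply Hvf|].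
  destruct (Hvf i) as [_ Hvi]. destruct (Hvf j) as [_ Hvj]. rewrite <- Heq in Hvj.
  destruct (commensurates_double_coset _ _ Hvi (commensurates_gpow_nat u m n i Hm Hn H))
    as [a [b [Ha [_ Hab]]]].
  assert (E : forall k, in_double_coset g (vf i) (gpow_nat u k) ->
    (b * m ^ Z.of_nat k = n ^ Z.of_nat k * a)%Z).
  { intros k Hk. apply (gpow_inj G g _ _ Hinf).
    rewrite <- (gconj_double_coset _ _ _ _ Hk (gconj_gpow_scale _ _ _ (m ^ Z.of_nat k) Hab)).
    rewrite (Z.mul_comm a). apply gconj_gpow_scale, gconj_gpow_nat, H. }
  assert (Habs : Z.abs m = Z.abs n)
    by (apply (Z_abs_eq_of_pow_ratio a b m n i j); auto; lia).
  exists m. split; [exact Hm|]. rewrite H.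
  destruct (Z.abs_eq_or_opp m), (Z.abs_eq_or_opp n);
    [left|right|right|left]; f_equal; lia.
Qed.

Lemma common_gconj_sign_exponent (l : list G) : exists M : Z, (1 <= M)%Z /\
  forall v, In v l -> commensurates g v ->
    gconj v (gpow g M) = gpow g M \/ gconj v (gpow g M) = gpow g (- M).
Proof.
  induction l as [|v l [M [HM IH]]].
  - exists 1%Z. split; [lia|]. intros v [].
  - destruct (classic (commensurates g v)) as [Hv|Hv].
    + destruct (commensurates_gconj_sign v Hv) as [m [Hm Hvm]].
      exists (M * Z.abs m)%Z. split; [nia|].
      assert (HMm : (M * Z.abs m = m * (Z.sgn m * M))%Z)
        by (destruct (Z.lt_trichotomy m 0) as [|[|]];
            [rewrite Z.sgn_neg, Z.abs_neq by lia|lia|rewrite Z.sgn_pos, Z.abs_eq by lia]; ring).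
      intros w [<-|Hw] Hcw.
      * rewrite HMm.
        destruct Hvm as [E|E]; [left|right]; rewrite (gconj_gpow_scale _ _ _ _ E); f_equal; lia.
      * destruct (IH w Hw Hcw) as [E|E]; [left|right];
          rewrite (gconj_gpow_scale _ _ _ _ E); f_equal; lia.
    + exists M. split; [exact HM|]. intros w [<-|Hw] Hcw; [contradiction|auto].
Qed.

Theorem commensurator_gconj_sign : exists M : Z, (1 <= M)%Z /\
  forall u, commensurates g u ->
    gconj u (gpow g M) = gpow g M \/ gconj u (gpow g M) = gpow g (- M).
Proof.
  destruct (common_gconj_sign_exponent F) as [M [HM HFM]].
  exists M. split; [exact HM|]. intros u Hu.
  destruct (HF u Hu) as [v [Fv Hvu]].
  destruct (HFM v Fv (commensurates_double_coset _ _ Hvu Hu))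
    as [E|E]; [left|right]; exact (gconj_double_coset _ _ _ _ Hvu E).
Qed.

End Commensurator.

Lemma gconj_sign_index_le2 (G : Group) (S : G -> Prop) (h : G) : S gone ->
  (forall u, S u -> gconj u h = h \/ gconj u h = ginv h) ->
  exists a b, S a /\ S b /\ forall u, S u ->
    gconj (gmul (ginv a) u) h = h \/ gconj (gmul (ginv b) u) h = h.
Proof.
  intros S1 Hsign.
  destruct (classic (exists b, S b /\ gconj b h = ginv h)) as [[b [Sb Hb]]|Hn].
  - exists gone, b. split; [exact S1|]. split; [exact Sb|]. intros u Su.
    rewrite ginv_one, gmul_1l.
    destruct (Hsign u Su) as [E|E]; [left; exact E|right].
    rewrite gconj_comp, E, <- Hb, gconj_VK. reflexivity.
  - exists gone, gone. split; [exact S1|]. split; [exact S1|]. intros u Su.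
    rewrite ginv_one, gmul_1l.
    destruct (Hsign u Su) as [E|E]; [left; exact E|].
    exfalso. apply Hn. exists u. split; assumption.
Qed.

Lemma dist_nonneg (X : MetricSpace) (x y : X) : 0 <= dist x y.
Proof.
  pose proof (dist_tri X x y x) as H. rewrite (dist_sym X y x) in H.
  assert (dist x x = 0) by (apply dist_eq0; reflexivity). lra.
Qed.

Lemma finite_range_bounded (f : Z -> R) (N : Z) :
  exists B, forall s, (0 <= s < N)%Z -> f s <= B.
Proof.
  assert (H : forall n : nat, exists B, forall s : nat, (s < n)%nat -> f (Z.of_nat s) <= B).
  { induction n as [|n [B HB]].
    - exists 0. intros; lia.
    - exists (Rmax B (f (Z.of_nat n))). intros s Hs.
      destruct (Nat.eq_dec s n) as [->|Hne]; [apply Rmax_r|].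
      eapply Rle_trans; [apply HB; lia|apply Rmax_l]. }
  destruct (H (Z.to_nat N)) as [B HB]. exists B. intros s Hs.
  replace s with (Z.of_nat (Z.to_nat s)) by lia. apply HB. lia.
Qed.

Lemma Z_div_mod_abs (k m : Z) : m <> 0%Z ->
  exists q s, (0 <= s < Z.abs m)%Z /\ k = (m * q + s)%Z.
Proof.
  intro Hm.
  pose proof (Z.div_mod k (Z.abs m) ltac:(lia)) as Hdm.
  pose proof (Z.mod_pos_bound k (Z.abs m) ltac:(lia)).
  exists (Z.sgn m * (k / Z.abs m))%Z, (k mod Z.abs m)%Z. split; [lia|].
  destruct (Z.lt_trichotomy m 0) as [|[|]].
  - rewrite Z.sgn_neg, Z.abs_neq in * by lia. nia.
  - lia.
  - rewrite Z.sgn_pos, Z.abs_eq in * by lia. nia.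
Qed.

Section Action.
Variables (G : Group) (X : MetricSpace) (act : G -> X -> X).
Hypothesis Hact : isometric_action G X act.

Lemma act_one x : act gone x = x.
Proof. apply Hact. Qed.

Lemma act_mul a b x : act (gmul a b) x = act a (act b x).
Proof. apply Hact. Qed.

Lemma act_dist a x y : dist (act a x) (act a y) = dist x y.
Proof. apply Hact. Qed.

Lemma act_VK a x : act (ginv a) (act a x) = x.
Proof. rewrite <- act_mul, gmul_Vl, act_one. reflexivity. Qed.

Lemma act_dist_V a x y : dist (act a x) y = dist x (act (ginv a) y).
Proof. rewrite <- (act_dist (ginv a)), act_VK. reflexivity. Qed.

End Action.

Section Orbit.
Variables (G : Group) (X : MetricSpace) (act : G -> X -> X) (g : G).
Hypothesis Hact : isometric_action G X act.
Hypothesis Hprop : proper_action G X act.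
Hypothesis Hinf : infinite_order g.

Lemma orbit_unbounded (x : X) (K : R) : exists k : Z, dist x (act (gpow g k) x) > K.
Proof.
  apply NNPP. intro Hn.
  destruct (Hprop x K) as [l Hl].
  destruct (pigeonhole_list G (fun i => gpow g (Z.of_nat i)) l) as [i [j [Hij Heq]]].
  { intros i _. apply Hl, Rnot_lt_le. intro. apply Hn. eexists; eassumption. }
  apply gpow_inj in Heq; [lia|exact Hinf].
Qed.

Variables (A : X -> Prop) (delta : R) (x0 : X).
Hypothesis HAinv : forall n : Z, forall x, A x <-> A (act (gpow g n) x).
Hypothesis Hcob : forall x y, A x -> A y -> exists n : Z, dist (act (gpow g n) x) y <= delta.
Hypothesis HAx0 : A x0.

(* Every point of [A] is [delta]-close to some [g^(m q + s) x0] with [0 <= s < |m|], which [u]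
   sends to [g^(n q) (u g^s x0)]: finitely many displacements [d(u g^s x0, x0)] remain. *)
Lemma gconj_gpow_moves_A_boundedly u m n : m <> 0%Z -> gconj u (gpow g m) = gpow g n ->
  exists r, forall x, A x -> exists y, A y /\ dist (act u x) y <= r.
Proof.
  intros Hm H.
  destruct (finite_range_bounded
    (fun s => dist (act u (act (gpow g s) x0)) x0) (Z.abs m)) as [B HB].
  exists (delta + B). intros x Ax.
  destruct (Hcob x0 x HAx0 Ax) as [k Hk].
  destruct (Z_div_mod_abs k m Hm) as [q [s [Hs ->]]].
  exists (act (gpow g (n * q)) x0). split; [apply HAinv, HAx0|].
  assert (Hu : act u (act (gpow g (m * q + s)) x0)
             = act (gpow g (n * q)) (act u (act (gpow g s) x0))).
  { rewrite <- !(act_mul _ _ _ Hact), gpow_add, gmul_assoc, (gmul_gconj G u),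
      (gconj_gpow_scale G g _ _ _ q H). reflexivity. }
  specialize (HB s Hs). simpl in HB.
  pose proof (dist_tri X (act u x) (act u (act (gpow g (m * q + s)) x0))
    (act (gpow g (n * q)) x0)) as Htri.
  rewrite (act_dist _ _ _ Hact u), Hu, (act_dist _ _ _ Hact), (dist_sym X x) in Htri. lra.
Qed.

Lemma elementary_of_commensurates u : commensurates g u -> elementary_closure act A u.
Proof.
  intros [m [n [Hm [Hn H]]]].
  destruct (gconj_gpow_moves_A_boundedly u m n Hm H) as [r1 H1].
  assert (H' : gconj (ginv u) (gpow g n) = gpow g m) by (rewrite <- H; apply gconj_VK).
  destruct (gconj_gpow_moves_A_boundedly (ginv u) n m Hn H') as [r2 H2].
  exists (Rmax r1 r2). split.
  - intros x Ax. destruct (H1 x Ax) as [y [Ay Hy]]. exists y. split; [exact Ay|].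
    eapply Rle_trans; [exact Hy|apply Rmax_l].
  - intros y Ay. destruct (H2 y Ay) as [x [Ax Hx]]. exists x. split; [exact Ax|].
    rewrite (act_dist_V _ _ _ Hact), dist_sym.
    eapply Rle_trans; [exact Hx|apply Rmax_r].
Qed.

(* The elements [g^(-j_k) u g^k u^-1] move [x0] by at most [2 r + delta]; by properness two
   of them coincide. *)
Lemma commensurates_of_elementary u : elementary_closure act A u -> commensurates g u.
Proof.
  intros [r [C1 C2]].
  destruct (C2 x0 HAx0) as [x1 [A1 Hx1]].
  assert (Hj : forall k : nat, exists j : Z,
    dist (act (gpow g j) x0) (act u (act (gpow g (Z.of_nat k)) x1)) <= r + delta).
  { intro k. destruct (C1 _ (proj1 (HAinv (Z.of_nat k) x1) A1)) as [y [Ay Hy]].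
    destruct (Hcob x0 y HAx0 Ay) as [j Hj]. exists j.
    pose proof (dist_tri X (act (gpow g j) x0) y (act u (act (gpow g (Z.of_nat k)) x1))).
    rewrite (dist_sym X y) in *. lra. }
  apply functional_choice in Hj as [jf Hjf].
  set (h := fun k : nat => gmul (gpow g (- jf k)) (gconj u (gpow g (Z.of_nat k)))).
  destruct (Hprop x0 (r + delta + r)) as [l Hl].
  destruct (pigeonhole_list G h l) as [i [j [Hij Heq]]].
  { intros i _. apply Hl. unfold h, gconj. rewrite !(act_mul _ _ _ Hact).
    rewrite dist_sym, (act_dist_V _ _ _ Hact (gpow g (- jf i))), gpow_opp, ginv_inv.
    pose proof (dist_tri X (act u (act (gpow g (Z.of_nat i)) (act (ginv u) x0)))
      (act u (act (gpow g (Z.of_nat i)) x1)) (act (gpow g (jf i)) x0)) as Htri.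
    rewrite !(act_dist _ _ _ Hact) in Htri.
    assert (dist (act (ginv u) x0) x1 <= r)
      by (rewrite dist_sym, <- (act_dist_V _ _ _ Hact); exact Hx1).
    specialize (Hjf i). rewrite dist_sym in Hjf. lra. }
  apply gconj_gpow_sub in Heq.
  exists (Z.of_nat j - Z.of_nat i)%Z, (jf j - jf i)%Z.
  split; [lia|]. split; [|exact Heq].
  intro E0. rewrite E0 in Heq.
  apply (Hinf (Z.of_nat j - Z.of_nat i)%Z); [lia|].
  apply (gconj_inj G u). rewrite Heq, gconj_one. reflexivity.
Qed.

End Orbit.

Lemma mul_le_abs_mul (c d r : R) : 0 <= d -> d <= r -> c * d <= Rabs c * r.
Proof. intros. pose proof (Rle_abs c). pose proof (Rabs_pos c). nra. Qed.

Section ConstrictingMap.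
Variables (X : MetricSpace) (Gam : path X -> Prop) (mu nu delta : R)
  (A : X -> Prop) (pi : X -> X).
Hypothesis Hjoin : forall x y : X, exists al, Gam al /\ joins al x y.
Hypothesis Hsub : forall al s t, Gam al -> pa al <= s -> s <= t -> t <= pb al ->
  Gam (mkpath s t (pf al)).
Hypothesis Hqg : forall al, Gam al -> quasi_geodesic mu nu al.
Hypothesis Hpi : constricting_map Gam delta A pi.

Lemma constricting_delta_nonneg : 0 <= delta.
Proof.
  destruct Hpi as [HA [HCS1 _]].
  eapply Rle_trans; [apply dist_nonneg|apply (HCS1 (pi (mpoint X)) (HA _))].
Qed.

(* Either [pi y] is [delta]-close to [pi a], or a path from [y] to [a] passes [delta]-close
   to [pi y] at a time [t <= |mu| r + |nu|]. *)
Lemma constricting_near_projection y a r : A a -> dist y a <= r ->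
  dist y (pi y) <= r + 3 * delta + Rabs mu * r + Rabs nu.
Proof.
  intros Aa Hya. destruct Hpi as [_ [HCS1 HCS2]].
  pose proof constricting_delta_nonneg. pose proof (dist_nonneg X y a).
  pose proof (Rle_abs nu). pose proof (Rabs_pos mu). pose proof (Rabs_pos nu).
  destruct (Rle_or_lt (dist (pi y) (pi a)) delta) as [Hle|Hgt].
  - pose proof (HCS1 a Aa).
    pose proof (dist_tri X y a (pi y)). pose proof (dist_tri X a (pi a) (pi y)).
    rewrite (dist_sym X (pi a) (pi y)) in *. nra.
  - destruct (Hjoin y a) as [al [Gal [J1 J2]]].
    destruct (HCS2 y a al Gal (conj J1 J2) Hgt) as [[t [Ht Hd]] _].
    assert (Hab : pa al <= pb al) by lra.
    destruct (Hqg al Gal t (pa al) Ht (conj (Rle_refl _) Hab)) as [Q1 _].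
    destruct (Hqg al Gal (pa al) (pb al) (conj (Rle_refl _) Hab) (conj Hab (Rle_refl _)))
      as [_ Q2].
    rewrite J1, J2 in *. rewrite Rabs_right in Q1 by lra. rewrite Rabs_left1 in Q2 by lra.
    pose proof (mul_le_abs_mul mu _ _ (dist_nonneg X y a) Hya).
    pose proof (dist_tri X y (pf al t) (pi y)). rewrite (dist_sym X y (pf al t)) in *. lra.
Qed.

Lemma subpath_near_projection al s t : Gam al -> pa al <= s -> s <= t -> t <= pb al ->
  (dist (pf al s) (pi (pf al s)) <= delta ->
     exists t', s <= t' <= t /\ dist (pf al t') (pi (pf al t)) <= 2 * delta) /\
  (dist (pf al t) (pi (pf al t)) <= delta ->
     exists t', s <= t' <= t /\ dist (pf al t') (pi (pf al s)) <= 2 * delta).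
Proof.
  intros Gal Hs Hst Ht. destruct Hpi as [_ [_ HCS2]].
  pose proof constricting_delta_nonneg.
  destruct (Rle_or_lt (dist (pi (pf al s)) (pi (pf al t))) delta) as [Hle|Hgt].
  - split; intro Hd.
    + exists s. split; [lra|].
      pose proof (dist_tri X (pf al s) (pi (pf al s)) (pi (pf al t))). lra.
    + exists t. split; [lra|].
      pose proof (dist_tri X (pf al t) (pi (pf al t)) (pi (pf al s))).
      rewrite (dist_sym X (pi (pf al t))) in *. lra.
  - assert (J : joins (mkpath s t (pf al)) (pf al s) (pf al t)) by (split; reflexivity).
    destruct (HCS2 _ _ _ (Hsub al s t Gal Hs Hst Ht) J Hgt) as [[t1 [T1 D1]] [t2 [T2 D2]]].
    simpl in *. split; intros _; [exists t2|exists t1]; split; auto; lra.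
Qed.

(* Quasi-convexity: points [t1 <= t0 <= t2] of the path that are [2 delta]-close to
   [pi (al t0)] pin [al t0] down, since the path is a quasi-geodesic. *)
Lemma path_near_projection al b y t0 : Gam al -> joins al b y -> A b -> A y ->
  pa al <= t0 <= pb al ->
  dist (pf al t0) (pi (pf al t0)) <= 2 * delta + Rabs mu * (4 * delta) + Rabs nu.
Proof.
  intros Gal [Jb Jy] Ab Ay T0. destruct Hpi as [_ [HCS1 _]].
  pose proof constricting_delta_nonneg. pose proof (Rle_abs nu).
  destruct (subpath_near_projection al (pa al) t0 Gal (Rle_refl _) (proj1 T0) (proj2 T0))
    as [L _].
  destruct (subpath_near_projection al t0 (pb al) Gal (proj1 T0) (proj2 T0) (Rle_refl _))
    as [_ Rt].
  destruct L as [t1 [T1 D1]]; [rewrite Jb; apply HCS1, Ab|].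
  destruct Rt as [t2 [T2 D2]]; [rewrite Jy; apply HCS1, Ay|].
  destruct (Hqg al Gal t0 t1 T0 ltac:(lra)) as [Q1 _].
  destruct (Hqg al Gal t1 t2 ltac:(lra) ltac:(lra)) as [_ Q2].
  rewrite Rabs_right in Q1 by lra. rewrite Rabs_left1 in Q2 by lra.
  assert (D12 : dist (pf al t1) (pf al t2) <= 4 * delta).
  { pose proof (dist_tri X (pf al t1) (pi (pf al t0)) (pf al t2)).
    rewrite (dist_sym X (pi _) (pf al t2)) in *. lra. }
  pose proof (mul_le_abs_mul mu _ _ (dist_nonneg X _ _) D12).
  pose proof (dist_tri X (pf al t0) (pf al t1) (pi (pf al t0))). lra.
Qed.

End ConstrictingMap.

Lemma constricting_map_translate (G : Group) (X : MetricSpace) (act : G -> X -> X)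
  (Gam : path X -> Prop) (delta : R) (A : X -> Prop) (pi : X -> X) (u : G) :
  isometric_action G X act -> (forall g al, Gam al -> Gam (translate act g al)) ->
  constricting_map Gam delta A pi ->
  constricting_map Gam delta (fun x => A (act (ginv u) x))
    (fun x => act u (pi (act (ginv u) x))).
Proof.
  intros Hact Htrans [HA [HCS1 HCS2]]. split; [|split].
  - intro x. rewrite (act_VK _ _ _ Hact). apply HA.
  - intros x Ax. rewrite dist_sym, (act_dist_V _ _ _ Hact), dist_sym. apply HCS1, Ax.
  - intros x y al Gal [J1 J2] Hd. rewrite (act_dist _ _ _ Hact) in Hd.
    assert (J : joins (translate act (ginv u) al) (act (ginv u) x) (act (ginv u) y))
      by (unfold joins, translate; simpl; rewrite J1, J2; split; reflexivity).
    destruct (HCS2 _ _ _ (Htrans (ginv u) al Gal) J Hd) as [[t1 [T1 D1]] [t2 [T2 D2]]].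
    simpl in *.
    split; [exists t1|exists t2]; split; try assumption;
      rewrite dist_sym, (act_dist_V _ _ _ Hact), dist_sym; assumption.
Qed.

Definition double_coset_radius (mu nu delta : R) : R :=
  5 * delta + 4 * Rabs mu * delta + Rabs nu.

(* Choose [k] with [u x0] and [u g^k x0] so far apart that their projections to [A] are; a
   path joining them passes [delta]-close to [pi (u x0)] at a point [z], which is uniformly
   close to [uA] by quasi-convexity. Coboundedness then links [x0] to [z] through
   [g^i x0] near [pi (u x0)] and [u g^j x0] near [z]. *)
Lemma elementary_near_double_coset (G : Group) (X : MetricSpace) (act : G -> X -> X)
  (Gam : path X -> Prop) (mu nu delta : R) (g : G) (A : X -> Prop) (pi : X -> X) (x0 : X) :
  path_system_group G X act Gam mu nu -> infinite_order g ->
  (forall n : Z, forall x, A x <-> A (act (gpow g n) x)) ->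
  constricting_map Gam delta A pi ->
  (forall x y, A x -> A y -> exists n : Z, dist (act (gpow g n) x) y <= delta) ->
  A x0 ->
  forall u, elementary_closure act A u -> exists v, in_double_coset g v u /\
    dist x0 (act v x0) <= double_coset_radius mu nu delta.
Proof.
  intros (_ & Hact & Hprop & _ & Htrans & Hsub & Hjoin & Hqg) Hinf HAinv Hpi Hcob HAx0
    u [r [Hr _]].
  pose proof (constricting_delta_nonneg X Gam delta A pi Hpi).
  pose proof (constricting_map_translate G X act Gam delta A pi u Hact Htrans Hpi) as Hpiu.
  pose proof Hpi as [HA [_ HCS2]].
  set (R1 := r + 3 * delta + Rabs mu * r + Rabs nu).
  assert (HR1 : forall a, A a -> dist (act u a) (pi (act u a)) <= R1).
  { intros a Aa. destruct (Hr a Aa) as [a' [Aa' Ha']].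
    exact (constricting_near_projection X Gam mu nu delta A pi Hjoin Hqg Hpi _ _ _ Aa' Ha'). }
  destruct (orbit_unbounded G X act g Hprop Hinf x0 (2 * R1 + delta)) as [k Hk].
  set (b := act u x0). set (y := act u (act (gpow g k) x0)).
  assert (Ay : A (act (gpow g k) x0)) by (apply HAinv, HAx0).
  assert (Hp : dist (pi b) (pi y) > delta).
  { pose proof (HR1 x0 HAx0). pose proof (HR1 _ Ay).
    assert (dist b y = dist x0 (act (gpow g k) x0)) by apply (act_dist _ _ _ Hact).
    pose proof (dist_tri X b (pi b) y). pose proof (dist_tri X (pi b) (pi y) y).
    rewrite (dist_sym X (pi y) y) in *. unfold b, y in *. lra. }
  destruct (Hjoin b y) as [al [Gal Jal]].
  destruct (HCS2 b y al Gal Jal Hp) as [[t0 [T0 Hz]] _].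
  pose proof (path_near_projection X Gam mu nu delta _ _ Hsub Hqg Hpiu al b y t0 Gal Jal)
    as Hzw. simpl in Hzw.
  set (a1 := pi (act (ginv u) (pf al t0))) in Hzw.
  destruct (Hcob x0 a1 HAx0 (HA _)) as [j Hj].
  destruct (Hcob x0 (pi b) HAx0 (HA _)) as [i Hi].
  exists (gmul (gmul (gpow g (- i)) u) (gpow g j)). split.
  { apply in_double_coset_sym. exists (- i)%Z, j. reflexivity. }
  rewrite !(act_mul _ _ _ Hact), dist_sym, (act_dist_V _ _ _ Hact), gpow_opp, ginv_inv.
  unfold b, y in *. rewrite !(act_VK _ _ _ Hact) in Hzw.
  specialize (Hzw HAx0 Ay T0).
  pose proof (dist_tri X (act u (act (gpow g j) x0)) (act u a1) (act (gpow g i) x0)) as T1.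
  pose proof (dist_tri X (act u a1) (pf al t0) (act (gpow g i) x0)) as T2.
  pose proof (dist_tri X (pf al t0) (pi (act u x0)) (act (gpow g i) x0)) as T3.
  rewrite (act_dist _ _ _ Hact) in T1.
  rewrite (dist_sym X (act u a1) (pf al t0)) in T2.
  rewrite (dist_sym X (pi (act u x0))) in T3.
  unfold double_coset_radius. lra.
Qed.

Theorem mainTheorem16 (G : Group) (X : MetricSpace) (act : G -> X -> X)
  (Gam : path X -> Prop) (mu nu delta : R) (g : G) (A : X -> Prop) :
  path_system_group G X act Gam mu nu ->
  constricting_element act Gam delta g A ->
  exists (theta : R) (M : Z),
    1 <= theta /\ (1 <= M)%Z /\ IZR M <= theta /\
    (forall u : G,
       (elementary_closure act A u <->
          exists p : Z, (p = 1%Z \/ p = (-1)%Z) /\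
            gconj u (gpow g M) = gpow g (p * M)) /\
       (elementary_closure act A u <->
          exists m n : Z, m <> 0%Z /\ n <> 0%Z /\
            gconj u (gpow g m) = gpow g n)) /\
    (exists a b : G,
       elementary_closure act A a /\ elementary_closure act A b /\
       forall u : G, elementary_closure act A u ->
         gconj (gmul (ginv a) u) (gpow g M) = gpow g M \/
         gconj (gmul (ginv b) u) (gpow g M) = gpow g M).
Proof.
  intros HP [Hinf [HAinv [[pi Hpi] Hcob]]].
  pose proof HP as (_ & Hact & Hprop & _).
  set (x0 := pi (mpoint X)).
  assert (HAx0 : A x0) by apply Hpi.
  assert (HE : forall u, elementary_closure act A u <-> commensurates g u).
  { intro u. split; [exact (commensurates_of_elementary G X act g Hact Hprop Hinf A delta x0
      HAinv Hcob HAx0 u)|exact (elementary_of_commensurates G X act g Hact A delta x0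
      HAinv Hcob HAx0 u)]. }
  destruct (Hprop x0 (double_coset_radius mu nu delta)) as [F HF].
  assert (Hcover : forall u, commensurates g u -> exists v, In v F /\ in_double_coset g v u).
  { intros u Hu.
    destruct (elementary_near_double_coset G X act Gam mu nu delta g A pi x0 HP Hinf
      HAinv Hpi Hcob HAx0 u (proj2 (HE u) Hu)) as [v [Hvu Hv]].
    exists v. split; [apply HF, Hv|exact Hvu]. }
  destruct (commensurator_gconj_sign G g Hinf F Hcover) as [M [HM Hsign]].
  exists (IZR M), M. split; [apply IZR_le in HM; exact HM|]. split; [exact HM|].
  split; [apply Rle_refl|]. split.
  - intro u. rewrite HE. split; [split|reflexivity].
    + intro Hu. destruct (Hsign u Hu) as [E|E]; [exists 1%Z|exists (-1)%Z];
        (split; [lia|]); rewrite E; f_equal; lia.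
    + intros [p [Hp E]]. exists M, (p * M)%Z. repeat split; [lia|nia|exact E].
  - apply gconj_sign_index_le2; [apply HE; exists 1%Z, 1%Z; repeat split; [lia|lia|apply gconj_1l]|].
    intros u Hu. rewrite <- gpow_opp. apply Hsign, HE, Hu.
Qed.
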